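(* Let $\mathcal{C}$ be a cograph on a point set $\mathcal{P}$ whose edge values $\mathcal{C}(P,Q)$ are sets, such that (i) for all distinct points $P,Q,R$, with $a=\mathcal{C}(P,Q)$, $b=\mathcal{C}(Q,R)$, $c=\mathcal{C}(R,P)$, one has $a\cap b=b\cap c=a\cap c$; and (ii) for all distinct points $P,Q,R,S$, $\mathcal{C}(P,Q)\cap\mathcal{C}(R,S)=\mathcal{C}(Q,R)\cap\mathcal{C}(S,P)$. For each $P\in\mathcal{P}$ choose a new element $P_o$, the $P_o$ being pairwise distinct and not belonging to any edge set, and define $P'=\{P_o\}\cup\bigcup_{Q\in\mathcal{P},\,Q\neq P}\mathcal{C}(P,Q)$. Then the sets $P'$ ($P\in\mathcal{P}$) are pairwise distinct and $P'\cap S'=\mathcal{C}(P,S)$ for all distinct $P,S\in\mathcal{P}$; that is, $\{P':P\in\mathcal{P}\}$ is an intersection cograph having the edges of $\mathcal{C}$.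
   Context: A cograph is a function $\mathcal{C}$ assigning to each unordered pair $\{P,Q\}$ of distinct elements of a point set $\mathcal{P}$ a value $\mathcal{C}(P,Q)$. An intersection cograph has as points distinct sets, with the edge between $P$ and $Q$ equal to $P\cap Q$. *)

From mathcomp Require Import all_boot.
From mathcomp Require Import boolp classical_sets.
Set Implicit Arguments. Unset Strict Implicit. Unset Printing Implicit Defensive.
Local Open Scope classical_set_scope.

(* A set-valued cograph on the point type Pt: a function assigning to every
   unordered pair {P,Q} of distinct points a set C P Q of elements of U.
   We represent it by C : Pt -> Pt -> set U together with symmetry on
   distinct pairs; the values C P P are irrelevant. *)
Definition cograph_sym (Pt U : Type) (C : Pt -> Pt -> set U) : Prop :=
  forall P Q : Pt, P <> Q -> C P Q = C Q P.

Definition prime_set (Pt U : Type) (C : Pt -> Pt -> set U) (o : Pt -> U)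
  (P : Pt) : set U :=
  [set o P] `|` \bigcup_(Q in [set Q | Q <> P]) C P Q.

(* Each P_o lies in P' and in no other S', so the sets P' are pairwise
   distinct.  Any other element of P' ∩ S' lies in some C(P,Q) and some
   C(S,R); (ii) puts it in C(Q,S), and then (i) for the triangle P, Q, S puts
   it in C(P,S). *)
From mathcomp Require Import all_boot.
From mathcomp Require Import boolp classical_sets.
Local Open Scope classical_set_scope.

Section PrimeSets.

Variables (Pt U : Type) (C : Pt -> Pt -> set U) (o : Pt -> U).
Hypothesis Csym : cograph_sym C.
Hypothesis o_inj : injective o.
Hypothesis o_new : forall P Q R : Pt, Q <> R -> ~ C Q R (o P).

Lemma o_mem_prime_set (P S : Pt) : prime_set C o S (o P) -> P = S.
Proof. by case=> [/o_inj //|[Q /= QS /(o_new P S Q (nesym QS))]]. Qed.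

Lemma prime_set_neq (P S : Pt) : P <> S -> prime_set C o P <> prime_set C o S.
Proof.
move=> PS eqPS; apply/PS/o_mem_prime_set.
by rewrite -eqPS; left.
Qed.

Lemma edge_sub_prime_set {P S : Pt} : P <> S -> C P S `<=` prime_set C o P.
Proof. by move=> PS x CPSx; right; exists S => //=; apply: nesym. Qed.

Section Edges.

Hypothesis C_triangle : forall P Q R : Pt, P <> Q -> Q <> R -> R <> P ->
  C P Q `&` C Q R `<=` C R P.
Hypothesis C_square : forall P Q R S : Pt, P <> Q -> P <> R -> P <> S ->
  Q <> R -> Q <> S -> R <> S -> C P Q `&` C R S `<=` C Q R.

Lemma edge_common_mem {P Q S R : Pt} {x : U} :
  P <> Q -> S <> R -> P <> S -> C P Q x -> C S R x -> C P S x.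
Proof.
move=> PQ SR PS CPQx CSRx.
have [<-|QS] := pselect (Q = S); first by [].
have [RP|RP] := pselect (R = P); first by rewrite Csym // -RP.
have CQSx : C Q S x.
  have [QR|QR] := pselect (Q = R); first by rewrite QR Csym //; apply: nesym.
  exact: (C_square P Q S R PQ PS (nesym RP) QS QR SR x (conj CPQx CSRx)).
by rewrite Csym //; apply: (C_triangle P Q S PQ QS (nesym PS)).
Qed.

Lemma prime_setI (P S : Pt) :
  P <> S -> prime_set C o P `&` prime_set C o S = C P S.
Proof.
move=> PS; apply/seteqP; split=> [x []|x CPSx]; last first.
  split; first exact: edge_sub_prime_set PS x CPSx.
  by apply: (edge_sub_prime_set (nesym PS) x); rewrite Csym //; apply: nesym.
case=> [->|[Q /= QP CPQx]]; first by move/o_mem_prime_set.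
case=> [oSx|[R /= RS CSRx]].
  by case: (o_new S P Q (nesym QP)); rewrite -oSx.
exact: (edge_common_mem (nesym QP) (nesym RS) PS).
Qed.

End Edges.

End PrimeSets.

Theorem proposition4p1p3 (Pt U : Type) (C : Pt -> Pt -> set U) (o : Pt -> U)
  (Csym : cograph_sym C)
  (Hi : forall P Q R : Pt, P <> Q -> Q <> R -> R <> P ->
     C P Q `&` C Q R = C Q R `&` C R P /\ C Q R `&` C R P = C P Q `&` C R P)
  (Hii : forall P Q R S : Pt, P <> Q -> P <> R -> P <> S -> Q <> R -> Q <> S ->
     R <> S -> C P Q `&` C R S = C Q R `&` C S P)
  (o_inj : injective o)
  (o_new : forall P Q R : Pt, Q <> R -> ~ C Q R (o P)) :
  (forall P S : Pt, P <> S -> prime_set C o P <> prime_set C o S) /\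
  (forall P S : Pt, P <> S -> prime_set C o P `&` prime_set C o S = C P S).
Proof.
have C_triangle P Q R : P <> Q -> Q <> R -> R <> P ->
    C P Q `&` C Q R `<=` C R P.
  by move=> PQ QR RP x; rewrite (proj1 (Hi P Q R PQ QR RP)) => -[].
have C_square P Q R S : P <> Q -> P <> R -> P <> S -> Q <> R -> Q <> S ->
    R <> S -> C P Q `&` C R S `<=` C Q R.
  by move=> PQ PR PS QR QS RS x; rewrite Hii // => -[].
split; first exact: prime_set_neq.
exact: prime_setI.
Qed.
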